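(* Let $m\geq 3$ and $n\geq 2$, and let $L_{m,n}$ be the lollipop graph. Then $\mathrm{ldim}_f(L_{m,n})=\frac{m}{2}$.
   Context: The lollipop graph $L_{m,n}$ is obtained from a complete graph $K_m$ and a path $P_n$ (on $n$ vertices), disjoint, by adding one edge joining a vertex of $K_m$ to an end vertex of $P_n$. For a connected graph $G$ and edge $uv$, $L(uv)=\{x\in V(G): d(u,x)\neq d(v,x)\}$ ($d$ the shortest-path distance). A function $f:V(G)\to[0,1]$ is a local resolving function if $\sum_{x\in L(uv)}f(x)\geq 1$ for every edge $uv$; $\mathrm{ldim}_f(G)$ is the minimum of $\sum_{v}f(v)$ over all local resolving functions. *)

From HB Require Import structures.
From mathcomp Require Import all_boot all_order all_algebra.
Set Implicit Arguments. Unset Strict Implicit. Unset Printing Implicit Defensive.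
Import Order.TTheory GRing.Theory Num.Theory.

Section Graphs.
Variables (T : finType) (e : rel T).

Fixpoint within (k : nat) (u : T) : {set T} :=
  match k with
  | 0 => [set u]
  | k'.+1 => within k' u :|: \bigcup_(y in within k' u) [set z | e y z]
  end.

(* shortest-path distance: least k with v within k steps of u
   (every finite distance is < #|T|; unreachable pairs get #|T|) *)
Definition dist (u v : T) : nat :=
  find (fun k => v \in within k u) (iota 0 #|T|).

Definition Lres (u v : T) : {set T} := [set x | dist u x != dist v x].

Definition connected_graph : Prop := forall u v : T, v \in within #|T| u.

Local Open Scope ring_scope.

Definition local_resolving_fun (R : realFieldType) (f : T -> R) : Prop :=
  (forall x, 0 <= f x <= 1) /\
  (forall u v, e u v -> 1 <= \sum_(x in Lres u v) f x).

Definition ldimf_eq (R : realFieldType) (r : R) : Prop :=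
  (exists f : T -> R, local_resolving_fun f /\ \sum_x f x = r) /\
  (forall f : T -> R, local_resolving_fun f -> r <= \sum_x f x).
End Graphs.
Arguments ldimf_eq T e R r : clear implicits.
Arguments local_resolving_fun T e R f : clear implicits.

(* Lollipop L_{m,n} on 'I_(m+n): vertices 0..m-1 form K_m, vertices
   m..m+n-1 form the path P_n, and m-1 is joined to the path end m. *)
Definition lollipop (m n : nat) : rel 'I_(m + n) :=
  fun i j =>
    ((i < m) && (j < m) && (i != j)) ||
    ((m <= maxn i j) && ((i.+1 == j :> nat) || (j.+1 == i :> nat))).
Arguments lollipop m n i j : clear implicits.

From HB Require Import structures.
From mathcomp Require Import all_boot all_order all_algebra.
From mathcomp Require Import zify lra.
Set Implicit Arguments.
Unset Strict Implicit.
Unset Printing Implicit Defensive.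
Import Order.TTheory GRing.Theory Num.Theory.

(* Call the clique vertices other than the one attached to the path "free".
   All free vertices lie at the same distance from every path vertex, so an
   edge between two free vertices is resolved only by its ends; hence weight
   1/2 on all free vertices but at most one, say u0.  The edge from u0 to the
   attachment vertex is resolved only by u0 and path vertices, which forces
   another unit of weight, and the total is at least (m-2)/2 + 1 = m/2.
   Conversely, weight 1/2 on every clique vertex resolves clique edges by their
   ends and path edges by any two free vertices. *)

Section Distance.
Variables (T : finType) (e : rel T).

Lemma within_step k u y z :
  y \in within e k u -> e y z -> z \in within e k.+1 u.
Proof. by move=> yk yz; rewrite /= inE; apply/orP; right; apply/bigcupP; exists y; rewrite ?inE. Qed.

Lemma withinSP k u z : z \in within e k.+1 u ->
  z \in within e k u \/ exists2 y, y \in within e k u & e y z.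
Proof. by rewrite /= inE => /orP[|/bigcupP[y yk]]; [left | rewrite inE; right; exists y]. Qed.

Lemma within_trans j k u v z :
  v \in within e j u -> z \in within e k v -> z \in within e (j + k) u.
Proof.
move=> vj; elim: k z => [|k IHk] z; first by rewrite addn0 inE => /eqP ->.
rewrite addnS => /withinSP[/IHk zk | [y /IHk yk yz]]; last exact: within_step yz.
by rewrite /= inE zk.
Qed.

Lemma within_sym (esym : symmetric e) k u v :
  (v \in within e k u) = (u \in within e k v).
Proof.
suff within_symW : forall k u v,
    v \in within e k u -> u \in within e k v.
  by apply/idP/idP; apply: within_symW.
elim=> [|{}k IHk] {}u {}v; first by rewrite !inE eq_sym.
case/withinSP=> [/IHk vk | [y /IHk uy yv]]; first by rewrite /= inE vk.
have y1v : y \in within e 1 v by apply: (@within_step 0 v v); rewrite ?inE // esym.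
exact: within_trans y1v uy.
Qed.

Lemma dist_eq u x k : k < #|T| -> x \in within e k u ->
  (forall j, j < k -> x \notin within e j u) -> dist e u x = k.
Proof.
move=> kT xk xj; rewrite /dist; set p := fun j => x \in within e j u.
have has_p : has p (iota 0 #|T|) by apply/hasP; exists k; rewrite ?mem_iota.
have find_lt : find p (iota 0 #|T|) < #|T|.
  by rewrite -[X in _ < X](size_iota 0 #|T|) -has_find.
case: (ltngtP (find p (iota 0 #|T|)) k) => // [ltk | gtk].
  have := nth_find 0 has_p; rewrite nth_iota // add0n => p_find.
  by have := xj _ ltk; rewrite -/(p _) p_find.
by have := before_find 0 gtk; rewrite nth_iota ?(ltn_trans gtk) // add0n /p xk.
Qed.

Lemma dist_sym (esym : symmetric e) u v : dist e u v = dist e v u.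
Proof. by apply: eq_find => k; apply: within_sym. Qed.

Lemma dist_refl u : dist e u u = 0.
Proof. by apply: dist_eq => //; [apply/card_gt0P; exists u | rewrite inE]. Qed.

Lemma dist_adj u v : e u v -> u != v -> dist e u v = 1.
Proof.
move=> uv u_neq_v; apply: dist_eq.
- by apply/card_gt1P; exists u, v.
- by apply: within_step uv; rewrite inE.
- by case=> // _; rewrite inE eq_sym.
Qed.

Section Height.
Variable h : T -> nat.
Hypothesis h_lip : forall y z, e y z -> h z <= (h y).+1.

Lemma within_height k u z : z \in within e k u -> h z <= h u + k.
Proof.
elim: k z => [|k IHk] z; first by rewrite addn0 inE => /eqP ->.
by case/withinSP=> [/IHk | [y /IHk hy /h_lip]]; lia.
Qed.

Lemma dist_height_eq u x k :
  k < #|T| -> x \in within e k u -> h u + k <= h x -> dist e u x = k.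
Proof.
move=> kT xk hx; apply: dist_eq => // j jk; apply/negP.
by move/within_height; lia.
Qed.

End Height.

End Distance.

Section Sums.
Local Open Scope ring_scope.
Variables (R : realFieldType) (T : finType) (f : T -> R).

Lemma pairwise_ge1_sum (P : pred T) u :
  P u -> (forall x y, P x -> P y -> x != y -> 1 <= f x + f y) ->
  exists2 u0, P u0 & f u0 + (#|P|%:R - 1) / 2 <= \sum_(x | P x) f x.
Proof.
move=> Pu f_pair.
have [u0 [Pu0 half_le]] : exists u0, P u0 /\
    forall x, P x -> x != u0 -> 2^-1 <= f x.
  case: (boolP [exists x, P x && (f x < 2^-1)]) => [/existsP[u0 /andP[Pu0 fu0_lt]]|].
    exists u0; split => // x Px xu0; have := f_pair x u0 Px Pu0 xu0; lra.
  rewrite negb_exists => /forallP small; exists u; split => // x Px _.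
  by have := small x; rewrite Px leNgt.
exists u0 => //; rewrite (bigD1 u0) //= lerD2l.
have half_sum : \sum_(x | P x && (x != u0)) (2^-1 : R) <=
                \sum_(x | P x && (x != u0)) f x.
  by apply: ler_sum => x /andP[]; apply: half_le.
apply: le_trans half_sum; rewrite sumr_const.
have -> : #|P| = (1 + #|[pred x | P x && (x != u0)]|)%N by apply: cardD1x.
rewrite natrD; lra.
Qed.

Hypothesis f_ge0 : forall x, 0 <= f x.

Lemma ler_sum_subset (P Q : pred T) :
  (forall x, P x -> Q x) -> \sum_(x | P x) f x <= \sum_(x | Q x) f x.
Proof.
move=> PQ; rewrite [leLHS]big_mkcond [leRHS]big_mkcond /= ler_sum // => x _.
by case: (boolP (P x)) => [/PQ -> // | _]; case: ifP.
Qed.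

Lemma ler_add_sum2 (P : pred T) u v :
  u != v -> P u -> P v -> f u + f v <= \sum_(x | P x) f x.
Proof.
move=> uv Pu Pv; rewrite (bigD1 u) //= (bigD1 v) /=; last by rewrite Pv eq_sym.
by rewrite lerD2l lerDl sumr_ge0.
Qed.

End Sums.

Lemma card_ord_lt N k : k <= N -> #|[pred i : 'I_N | i < k]| = k.
Proof.
move=> kN; rewrite -sum1_card -(big_ord_widen _ (fun _ => 1%N)) //.
by rewrite sum_nat_const card_ord muln1.
Qed.

Section Lollipop.
Variables (m n : nat).
Hypothesis m_ge3 : 3 <= m.
Local Notation T := 'I_(m + n).
Local Notation e := (lollipop m n).

Lemma lollipop_sym : symmetric e.
Proof.
move=> i j; rewrite /lollipop maxnC (eq_sym j) [(j < m) && _]andbC.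
by rewrite [(j.+1 == _) || _]orbC.
Qed.

Lemma lollipop_clique (x y : T) : x < m -> y < m -> x != y -> e x y.
Proof. by move=> xm ym xy; rewrite /lollipop xm ym xy. Qed.

Lemma lollipop_path (x y : T) : m.-1 <= x -> y = x.+1 :> nat -> e x y.
Proof.
by move=> xm yx; rewrite /lollipop yx eqxx andbT; apply/orP; right; lia.
Qed.

Lemma lollipop_edge_cases (x y : T) : e x y ->
  [/\ x < m, y < m & x != y] \/ (m <= maxn x y /\ (x.+1 = y \/ y.+1 = x)).
Proof.
case/orP=> [/andP[/andP[xm ym] xy] | /andP[mxy /orP[/eqP xy | /eqP yx]]].
- by left.
- by right; split; [|left].
- by right; split; [|right].
Qed.

(* The distance of a vertex from the free vertices, which are 0, ..., m-2. *)
Definition depth (x : T) : nat := x - (m - 2).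

Lemma depth_lipschitz (y z : T) : e y z -> depth z <= (depth y).+1.
Proof. by rewrite /depth => /lollipop_edge_cases[[] | [_ []]]; lia. Qed.

Lemma attach_lt : m.-1 < m + n.
Proof. lia. Qed.

Definition attach : T := Ordinal attach_lt.

Lemma within_tail (x : T) : m.-1 <= x -> x \in within e (x - m.-1) attach.
Proof.
move=> xm; suff walk d (y : T) : y = m.-1 + d :> nat -> y \in within e d attach.
  by apply: walk; lia.
elim: d y => [|d IHd] y yd; first by rewrite inE; apply/eqP/val_inj => /=; lia.
have y_pred_lt : y.-1 < m + n by have := ltn_ord y; lia.
apply: (within_step (y := Ordinal y_pred_lt)); first by apply: IHd => /=; lia.
by apply: lollipop_path => /=; lia.
Qed.

Lemma dist_free (a x : T) : a < m.-1 -> m.-1 <= x -> dist e a x = depth x.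
Proof.
move=> am xm; apply: (dist_height_eq depth_lipschitz).
- by rewrite card_ord /depth; have := ltn_ord x; lia.
- have a_attach : attach \in within e 1 a.
    apply: (within_step (y := a)); rewrite ?inE //.
    by apply: lollipop_clique; [lia | rewrite /=; lia | apply/eqP => /(congr1 val)/=; lia].
  have -> : depth x = 1 + (x - m.-1) by rewrite /depth; lia.
  exact: within_trans a_attach (within_tail xm).
- by rewrite /depth; lia.
Qed.

Lemma two_free_vertices : exists a b : T, [/\ a < m.-1, b < m.-1 & a != b].
Proof.
have lt0 : 0 < m + n by lia.
have lt1 : 1 < m + n by lia.
by exists (Ordinal lt0), (Ordinal lt1); split => //=; lia.
Qed.

Lemma Lres_clique (u v : T) :
  u < m -> v < m -> u != v -> (u \in Lres e u v) && (v \in Lres e u v).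
Proof.
move=> um vm uv; have vu : v != u by rewrite eq_sym.
by rewrite !inE !dist_refl !dist_adj ?lollipop_clique.
Qed.

Lemma Lres_free (x y : T) :
  x < m.-1 -> y < m.-1 -> x != y -> Lres e x y \subset [set x; y].
Proof.
move=> xm ym xy; apply/subsetP => z; rewrite !inE; apply: contraTT.
case/norP=> zx zy; rewrite negbK; case: (ltnP z m) => zm.
  by rewrite !dist_adj ?lollipop_clique 1?eq_sym //; lia.
by rewrite !dist_free //; lia.
Qed.

Lemma Lres_path (u v a : T) : e u v -> m.-1 <= u -> m.-1 <= v -> a < m.-1 ->
  a \in Lres e u v.
Proof.
move=> uv um vm am; rewrite inE ![dist e _ a](dist_sym lollipop_sym).
rewrite !dist_free // /depth; case/lollipop_edge_cases: uv => [[um' vm' /eqP uv]|[_ []]].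
  by case: uv; apply/val_inj => /=; lia.
all: by move=> step; apply/negP => /eqP; lia.
Qed.

Lemma Lres_attach (u0 : T) : u0 < m.-1 ->
  {subset Lres e u0 attach <= [pred z : T | (z == u0) || (m.-1 <= z)]}.
Proof.
move=> u0m z; rewrite !inE; apply: contraTT; case/norP=> zu0; rewrite -ltnNge negbK => zm.
rewrite !dist_adj ?lollipop_clique 1?eq_sym //=; try lia.
all: by apply/eqP => /(congr1 val)/=; lia.
Qed.

Section Weights.
Local Open Scope ring_scope.
Variable R : realFieldType.

Lemma ldimf_lollipop_upper :
  exists f : T -> R, local_resolving_fun _ e R f /\ \sum_x f x = m%:R / 2.
Proof.
pose f (x : T) : R := if (x < m)%N then 2^-1 else 0.
have f_ge0 x : 0 <= f x by rewrite /f; case: ifP => _; lra.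
exists f; split; [split => [x | u v uv] |].
- by rewrite /f; case: ifP => _; apply/andP; split; lra.
- case/lollipop_edge_cases: (uv) => [[um vm u_neq_v] | [muv uv_step]].
    case/andP: (Lres_clique um vm u_neq_v) => Lu Lv.
    apply: le_trans (ler_add_sum2 f_ge0 u_neq_v Lu Lv); rewrite /f um vm; lra.
  have [a [b [am bm ab]]] := two_free_vertices.
  have [um vm] : (m.-1 <= u)%N /\ (m.-1 <= v)%N by case: uv_step; lia.
  apply: le_trans (ler_add_sum2 f_ge0 ab (Lres_path uv um vm am) (Lres_path uv um vm bm)).
  by rewrite /f !ifT; [lra | lia | lia].
- rewrite -big_mkcond /= -(big_ord_widen _ (fun _ => 2^-1)) ?leq_addr //.
  by rewrite sumr_const card_ord mulr_natl.
Qed.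

Lemma ldimf_lollipop_lower (f : T -> R) :
  local_resolving_fun _ e R f -> m%:R / 2 <= \sum_x f x.
Proof.
move=> [f01 f_edge]; have f_ge0 x : 0 <= f x by case/andP: (f01 x).
have free_pair (x y : T) : (x < m.-1)%N -> (y < m.-1)%N -> x != y -> 1 <= f x + f y.
  move=> xm ym xy; apply: le_trans (f_edge x y _) _.
    by apply: lollipop_clique => //; lia.
  apply: le_trans (ler_sum_subset f_ge0 (Q := mem [set x; y]) _) _.
    by move=> z; apply: (subsetP (Lres_free xm ym xy)).
  by rewrite big_setU1 ?big_set1 ?inE.
have [a [_ [am _ _]]] := two_free_vertices.
have [u0 u0m free_sum] := pairwise_ge1_sum (P := fun x : T => (x < m.-1)%N) am free_pair.
rewrite card_ord_lt in free_sum; last lia.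
have attach_edge : 1 <= f u0 + \sum_(z : T | (m.-1 <= z)%N) f z.
  apply: le_trans (f_edge u0 attach _) _.
    by apply: lollipop_clique => //=; [lia | lia | apply/eqP => /(congr1 val)/=; lia].
  apply: le_trans (ler_sum_subset f_ge0 (Lres_attach u0m)) _.
  rewrite (bigD1 u0) ?inE ?eqxx //= lerD2l; apply: ler_sum_subset => // z.
  by case/andP=> /orP[/eqP -> | //]; rewrite eqxx.
have m_pred : (m.-1)%:R = m%:R - 1 :> R by rewrite -subn1 natrB //; lia.
rewrite (bigID (fun x : T => (x < m.-1)%N)) /=.
under [X in _ <= _ + X]eq_bigl do rewrite -leqNgt.
lra.
Qed.

End Weights.
End Lollipop.

Local Open Scope ring_scope.

Theorem corollary2p6 (R : realFieldType) (m n : nat) :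
  (3 <= m)%N -> (2 <= n)%N ->
  ldimf_eq _ (lollipop m n) R ((m%:R : R) / 2).
Proof.
move=> m_ge3 _; split; [exact: ldimf_lollipop_upper | exact: ldimf_lollipop_lower].
Qed.
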